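(* Let $f_n:\{0,1\}^{m_n}\to\{0,1\}^n$ be a family of functions computable by $\mathbf{NC}^0$ circuits, and let $c$ be the maximum number of inputs affecting any single output. Let $W_1,\dots,W_{m_n}$ be independent $\{0,1\}$-valued random variables and $X'=f_n(W)$. Let $n\ge b_0\ge b_1\ge\cdots\ge b_{2c}\ge1$. Then for every $n$ there exist $0<i\le 2c$, $S\subseteq\{1,\dots,n\}$ and $T\subseteq\{1,\dots,m_n\}$ such that $|S|\ge\frac{n}{2cb_i}$, $|T|\le cn/b_{i-1}$, and the random variables $\{X'_j:j\in S\}$ are mutually independent conditioned on any fixed value of $\{W_j:j\in T\}$.
   Context: An $\mathbf{NC}^0$ circuit family is one in which each output bit depends on at most a constant number $c$ (independent of $n$) of input bits; an input ''affects'' an output if the output's value depends on it. *)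

From HB Require Import structures.
From mathcomp Require Import all_boot all_order all_algebra.
Set Implicit Arguments. Unset Strict Implicit. Unset Printing Implicit Defensive.
Import Order.TTheory GRing.Theory Num.Theory.
Local Open Scope ring_scope.

Definition flip (m : nat) (w : {ffun 'I_m -> bool}) (k : 'I_m) : {ffun 'I_m -> bool} :=
  [ffun k' => if k' == k then ~~ w k else w k'].

Definition affects (m n : nat) (f : {ffun 'I_m -> bool} -> 'I_n -> bool)
  (j : 'I_n) (k : 'I_m) : bool :=
  [exists w, f w j != f (flip w k) j].

Definition deps (m n : nat) (f : {ffun 'I_m -> bool} -> 'I_n -> bool) (j : 'I_n)
  : {set 'I_m} := [set k | affects f j k].

Definition locality (m n : nat) (f : {ffun 'I_m -> bool} -> 'I_n -> bool) : nat :=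
  (\max_(j : 'I_n) #|deps f j|)%N.

(* Law of independent {0,1}-valued W_1..W_m with P(W_k = 1) = p k. *)
Definition prodw (R : realFieldType) (m : nat) (p : 'I_m -> R)
  (w : {ffun 'I_m -> bool}) : R :=
  \prod_(k : 'I_m) (if w k then p k else 1 - p k).

Definition Pr (R : realFieldType) (m : nat) (p : 'I_m -> R)
  (E : pred {ffun 'I_m -> bool}) : R :=
  \sum_(w | E w) prodw p w.

Definition fixT (m : nat) (T : {set 'I_m}) (a : {ffun 'I_m -> bool})
  : pred {ffun 'I_m -> bool} :=
  fun w => [forall k in T, w k == a k].

(* The outputs {X'_j = f(W)_j : j in S} are mutually independent conditioned on
   every fixed value a of {W_k : k in T} (of positive probability): for every
   subfamily S' ⊆ S and every value x, the conditional product rule holds. *)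
Definition cond_indep (R : realFieldType) (m n : nat) (p : 'I_m -> R)
  (f : {ffun 'I_m -> bool} -> 'I_n -> bool) (S : {set 'I_n}) (T : {set 'I_m}) : Prop :=
  forall a : {ffun 'I_m -> bool}, 0 < Pr p (fixT T a) ->
  forall (S' : {set 'I_n}), S' \subset S ->
  forall x : {ffun 'I_n -> bool},
    Pr p (fun w => fixT T a w && [forall j in S', f w j == x j]) / Pr p (fixT T a)
    = \prod_(j in S') (Pr p (fun w => fixT T a w && (f w j == x j)) / Pr p (fixT T a)).

From HB Require Import structures.
From mathcomp Require Import all_boot all_order all_algebra.
From mathcomp Require Import ring.
Set Implicit Arguments.
Unset Strict Implicit.
Unset Printing Implicit Defensive.
Import Order.TTheory GRing.Theory Num.Theory.
Local Open Scope ring_scope.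

(* Call the number of outputs an input affects its fanout; the fanouts sum to at most
   c n.  The 2c bands b_i <= fanout < b_(i-1), 0 < i <= 2c, are disjoint and every
   output depends on inputs from at most c of them, so some band i is hit by at most
   n/2 outputs.  Fix the set T of the inputs of fanout >= b_(i-1): there are at most
   c n / b_(i-1) of them.  Outside T, an output missing band i depends only on inputs of
   fanout < b_i, so it shares such an input with at most c b_i outputs, and a greedy
   choice among the >= n/2 such outputs gives n / (2 c b_i) of them whose dependencies
   outside T are pairwise disjoint.  Once W_T is fixed, these outputs are functions of
   disjoint sets of independent inputs, hence independent. *)

Lemma card_set_sum (I : finType) (P : pred I) : #|[set i | P i]| = (\sum_i (P i : nat))%N.
Proof. by rewrite -sum1dep_card big_mkcond; apply: eq_bigr => i _; case: (P i). Qed.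

Lemma exists_le_sum (I : finType) (D P : pred I) :
  ([exists k in D, P k] <= \sum_(k in D) (P k : nat))%N.
Proof. by case: existsP => // -[k /andP[kD Pk]]; rewrite (bigD1 k) //= Pk. Qed.

Lemma card_exists_le_sum (I J : finType) (D : {set J}) (r : J -> I -> bool) :
  (#|[set i | [exists k in D, r k i]]| <= \sum_(k in D) #|[set i | r k i]|)%N.
Proof.
rewrite card_set_sum; under [X in (_ <= X)%N]eq_bigr do rewrite card_set_sum.
by rewrite exchange_big /=; apply: leq_sum => i _; apply: exists_le_sum.
Qed.

Lemma sum_card_rel (I J : finType) (r : I -> J -> bool) :
  (\sum_i #|[set j | r i j]| = \sum_j #|[set i | r i j]|)%N.
Proof.
under eq_bigr do rewrite card_set_sum.
by rewrite exchange_big; apply: eq_bigr => j _; rewrite card_set_sum.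
Qed.

Lemma exists_le_avg k (F : 'I_k -> nat) q :
  (0 < k)%N -> (\sum_i F i <= k * q)%N -> exists i, (F i <= q)%N.
Proof.
move=> k_gt0 sumF; apply/existsP; apply: contraLR sumF; rewrite negb_exists -ltnNge.
move=> /forallP F_gt; have : (\sum_(i < k) q.+1 <= \sum_i F i)%N.
  by apply: leq_sum => i _; rewrite ltnNge F_gt.
by apply: leq_trans; rewrite sum_nat_const card_ord ltn_pmul2l.
Qed.

Definition closed_nbhd (I : finType) (r : rel I) (j : I) : {set I} :=
  [set j' | (j' == j) || r j j'].

Lemma greedy_independent_set (I : finType) (r : rel I) : symmetric r ->
  forall G : {set I}, exists S : {set I},
  [/\ S \subset G, {in S &, forall j j', j != j' -> ~~ r j j'}
    & (#|G| <= \sum_(j in S) #|closed_nbhd r j|)%N].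
Proof.
move=> r_sym G; elim: {G}_.+1 {-2}G (ltnSn #|G|) => // N IH G.
case: (set_0Vmem G) => [-> _ | [j jG] G_lt].
  by exists set0; rewrite sub0set big_set0 cards0; split=> // ?; rewrite inE.
have j_nbhd : j \in closed_nbhd r j by rewrite inE eqxx.
have [S [sSG S_indep cover]] : exists S : {set I}, [/\ S \subset G :\: closed_nbhd r j,
    {in S &, forall j j', j != j' -> ~~ r j j'}
    & (#|G :\: closed_nbhd r j| <= \sum_(j in S) #|closed_nbhd r j|)%N].
  apply: IH; rewrite ltnS in G_lt; apply: (leq_trans _ G_lt).
  apply: proper_card; apply/properP.
  by split; [apply: subsetDl | exists j; rewrite // inE j_nbhd].
have jNS : j \notin S by apply: contraL j_nbhd => /(subsetP sSG); rewrite inE => /andP[].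
have S_far j' : j' \in S -> ~~ r j j'.
  by move=> /(subsetP sSG); rewrite !inE negb_or => /andP[/andP[]].
exists (j |: S); split.
- by rewrite subUset sub1set jG (subset_trans sSG) ?subsetDl.
- move=> y z; rewrite !inE => /orP[/eqP-> | yS] /orP[/eqP-> | zS]; rewrite ?eqxx //.
  + by move=> _; apply: S_far.
  + by move=> _; rewrite r_sym; apply: S_far.
  + exact: S_indep.
- rewrite big_setU1 //= -(cardsID (closed_nbhd r j) G) leq_add //.
  by rewrite subset_leq_card ?subsetIr.
Qed.

Section ProductMeasure.
Variables (R : realFieldType) (m : nat) (p : 'I_m -> R).

Lemma eq_Pr (E E' : pred {ffun 'I_m -> bool}) : E =1 E' -> Pr p E = Pr p E'.
Proof. by move=> eE; apply: eq_bigl. Qed.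

Definition merge (D : {set 'I_m}) (x y : {ffun 'I_m -> bool}) : {ffun 'I_m -> bool} :=
  [ffun k => if k \in D then x k else y k].

Lemma merge_swapK D : involutive (fun uv => (merge D uv.1 uv.2, merge D uv.2 uv.1)).
Proof. by move=> [u v]; congr pair; apply/ffunP => k; rewrite !ffunE; case: (k \in D). Qed.

Lemma fixT_merge (T D : {set 'I_m}) a x y :
  [disjoint D & T] -> fixT T a (merge D x y) = fixT T a y.
Proof. by move=> DT; apply: eq_forallb_in => k kT; rewrite ffunE (disjointFl DT kT). Qed.

(* Swapping the D-coordinates of a pair of assignments is a bijection that preserves
   the product of the weights [prodw]. *)
Lemma Pr_fixT_mul (T D : {set 'I_m}) a (A B : pred {ffun 'I_m -> bool}) :
  [disjoint D & T] ->
  (forall w w' : {ffun 'I_m -> bool}, {in D :|: T, w =1 w'} -> A w = A w') ->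
  (forall w w' : {ffun 'I_m -> bool}, {in [predC D], w =1 w'} -> B w = B w') ->
  Pr p (fun w => fixT T a w && (A w && B w)) * Pr p (fixT T a) =
  Pr p (fun w => fixT T a w && A w) * Pr p (fun w => fixT T a w && B w).
Proof.
move=> DT A_loc B_loc; rewrite /Pr !mulr_suml.
under eq_bigr do rewrite mulr_sumr.
under [RHS]eq_bigr do rewrite mulr_sumr.
rewrite !pair_big_dep [RHS](reindex_inj (inv_inj (merge_swapK D))) /=.
apply: eq_big => [[u v] | [u v] _] /=.
  rewrite !fixT_merge //.
  case Tu: (fixT T a u); case Tv: (fixT T a v); rewrite ?andbF //=.
  have -> : A (merge D u v) = A u.
    apply: A_loc => k; rewrite inE ffunE; case: ifP => //= _ kT.
    by move/forall_inP/(_ k kT)/eqP: Tu => ->; move/forall_inP/(_ k kT)/eqP: Tv.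
  have -> : B (merge D v u) = B u.
    by apply: B_loc => k; rewrite inE ffunE => /negbTE ->.
  by rewrite andbT.
rewrite /prodw -[LHS]big_split -[RHS]big_split /=; apply: eq_bigr => k _; rewrite !ffunE.
by case: (k \in D); rewrite // mulrC.
Qed.

End ProductMeasure.

Lemma eq_output_on_deps m n (f : {ffun 'I_m -> bool} -> 'I_n -> bool) j
    (w w' : {ffun 'I_m -> bool}) :
  {in deps f j, w =1 w'} -> f w j = f w' j.
Proof.
elim: {w}_.+1 {-2}w (ltnSn #|[set k | w k != w' k]|) => // N IH w.
case: (set_0Vmem [set k | w k != w' k]) => [w_eq _ _ | [k]].
  suff -> : w = w' by [].
  apply/ffunP => k; apply/eqP; apply: contraT => wk_ne.
  have : k \in [set k | w k != w' k] by rewrite inE.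
  by rewrite w_eq inE.
rewrite inE => wk_ne w_lt ww'.
have kNdep : k \notin deps f j by apply: contra wk_ne => /ww' ->.
have -> : f w j = f (flip w k) j.
  by move: kNdep; rewrite inE negb_exists => /forallP/(_ w); rewrite negbK => /eqP.
have flip_k : ~~ w k == w' k by move: wk_ne; case: (w k); case: (w' k).
apply: IH => [|k' k'dep]; last first.
  rewrite ffunE; case: eqVneq => [ek | _]; last exact: ww'.
  by rewrite -ek k'dep in kNdep.
rewrite ltnS in w_lt; apply: (leq_trans _ w_lt); apply: proper_card; apply/properP.
split; last by exists k; rewrite !inE ?ffunE ?eqxx ?flip_k.
apply/subsetP => k'; rewrite !inE ffunE.
by case: (eqVneq k' k) => [-> | //]; rewrite flip_k.
Qed.

Lemma cond_indep_of_disjoint_deps (R : realFieldType) m n (p : 'I_m -> R)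
    (f : {ffun 'I_m -> bool} -> 'I_n -> bool) (S : {set 'I_n}) (T : {set 'I_m}) :
  {in S &, forall j j', j != j' -> deps f j :&: deps f j' \subset T} ->
  cond_indep p f S T.
Proof.
move=> S_sep a Ta_gt0 S'; have Ta_neq0 : Pr p (fixT T a) != 0 by rewrite gt_eqF.
elim: {S'}_.+1 {-2}S' (ltnSn #|S'|) => // N IH S' S'_lt sS'S x.
case: (set_0Vmem S') => [-> | [j0 j0S']].
  rewrite big_set0 -[RHS](divff Ta_neq0); congr (_ / _); apply: eq_Pr => w.
  by apply: andb_idr => _; apply/forall_inP => j; rewrite inE.
set rest := S' :\ j0.
have rest_lt : (#|rest| < N)%N by move: S'_lt; rewrite (cardsD1 j0 S') j0S'.
rewrite (big_setD1 _ j0S') /= -(IH rest) //; last first.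
  exact: subset_trans (subsetDl _ _) sS'S.
rewrite (@eq_Pr _ _ _ _ (fun w => fixT T a w &&
  ((f w j0 == x j0) && [forall j in rest, f w j == x j]))); last first.
  by move=> w; rewrite /= -!big_andE (big_setD1 _ j0S').
(* Given W_T, the event for [j0] only reads the inputs [deps f j0 :\: T], which no
   other output of [S] reads. *)
rewrite -[X in X / _](mulfK Ta_neq0) (@Pr_fixT_mul _ _ _ _ (deps f j0 :\: T)).
- by field.
- by rewrite disjoints_subset setDE subsetIr.
- move=> w w' ww'; congr (_ == _); apply: eq_output_on_deps => k kdep.
  by apply: ww'; rewrite in_setU in_setD kdep andbT orNb.
move=> w w' ww'; apply: eq_forallb_in => j; rewrite in_setD1 => /andP[j_ne jS'].
have [jS j0S] : j \in S /\ j0 \in S by split; apply: (subsetP sS'S).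
congr (_ == _); apply: eq_output_on_deps => k kdep; apply: ww'.
rewrite inE in_setD negb_and negbK.
case: (boolP (k \in deps f j0)) => [kdep0 | _]; last by rewrite orbT.
by rewrite orbF (subsetP (S_sep j j0 jS j0S j_ne)) // inE kdep kdep0.
Qed.

Section Locality.
Variables (R : realFieldType) (m n : nat) (f : {ffun 'I_m -> bool} -> 'I_n -> bool).
Local Notation c := (locality f).

Definition fanout (k : 'I_m) : nat := #|[set j | k \in deps f j]|.

Definition heavy (t : R) : {set 'I_m} := [set k | t <= (fanout k)%:R].

Lemma card_deps_le_locality j : (#|deps f j| <= c)%N.
Proof. exact: leq_bigmax. Qed.

Lemma sum_card_deps_le : (\sum_j #|deps f j| <= n * c)%N.
Proof.
rewrite -[n in (_ <= n * _)%N]card_ord -sum_nat_const.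
by apply: leq_sum => j _; apply: card_deps_le_locality.
Qed.

Lemma sum_fanout : (\sum_k fanout k = \sum_j #|deps f j|)%N.
Proof.
rewrite /fanout sum_card_rel; apply: eq_bigr => j _.
by apply: eq_card => k; rewrite inE.
Qed.

Lemma card_heavy_le t : #|heavy t|%:R * t <= (n * c)%:R.
Proof.
rewrite mulr_natl -sumr_const.
apply: (@le_trans _ _ (\sum_(k in heavy t) (fanout k)%:R)).
  by apply: ler_sum => k; rewrite inE.
rewrite -natr_sum ler_nat; apply: leq_trans sum_card_deps_le.
by rewrite -sum_fanout [leqRHS](bigID (mem (heavy t))) /= leq_addr.
Qed.

Definition conflict (T : {set 'I_m}) : rel 'I_n :=
  fun j j' => [exists k, [&& k \in deps f j, k \in deps f j' & k \notin T]].

Lemma conflict_sym T : symmetric (conflict T).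
Proof. by move=> j j'; apply: eq_existsb => k; rewrite andbCA. Qed.

Lemma deps_subset_of_no_conflict T j j' :
  ~~ conflict T j j' -> deps f j :&: deps f j' \subset T.
Proof.
rewrite negb_exists => /forallP no_k; apply/subsetP => k; rewrite inE => /andP[kj kj'].
by move: (no_k k); rewrite kj kj' negbK.
Qed.

Lemma card_conflict_nbhd_le T j (t : R) : (0 < c)%N -> 1 <= t ->
    (forall k, k \in deps f j :\: T -> (fanout k)%:R < t) ->
  #|closed_nbhd (conflict T) j|%:R <= c%:R * t.
Proof.
move=> c_gt0 t_ge1; set D := deps f j :\: T => light.
have conflict_in_D j' : conflict T j j' -> [exists k in D, k \in deps f j'].
  by case/existsP=> k /and3P[kj kj' kT]; apply/existsP; exists k; rewrite in_setD kT kj kj'.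
case: (set_0Vmem D) => [D0 | [k0 k0D]].
  have : closed_nbhd (conflict T) j \subset [set j].
    apply/subsetP => j'; rewrite !inE => /orP[// | /conflict_in_D].
    by case/existsP=> k; rewrite D0 inE.
  move/subset_leq_card; rewrite cards1 -(ler_nat R) => /le_trans; apply.
  by apply: mulr_ege1; rewrite ?ler1n.
have : closed_nbhd (conflict T) j \subset [set j' | [exists k in D, k \in deps f j']].
  apply/subsetP => j'; rewrite !inE => /orP[/eqP-> | /conflict_in_D //].
  by apply/existsP; exists k0; rewrite k0D; move: k0D; rewrite in_setD => /andP[].
move/subset_leq_card/leq_trans/(_ (card_exists_le_sum _ _)).
rewrite -(ler_nat R) natr_sum => /le_trans; apply.
apply: (@le_trans _ _ (\sum_(k in D) t)); first by apply: ler_sum => k /light/ltW.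
rewrite sumr_const -[t *+ _]mulr_natl ler_wpM2r ?(le_trans ler01) // ler_nat.
exact: leq_trans (subset_leq_card (subsetDl _ _)) (card_deps_le_locality j).
Qed.

Variable b : nat -> R.
Hypothesis b_nonincr : forall i, (i < 2 * c)%N -> b i.+1 <= b i.

Lemma b_le_of_leq i j : (i <= j <= 2 * c)%N -> b j <= b i.
Proof.
case/andP=> ij jc; elim: j ij jc => [|j IH]; first by rewrite leqn0 => /eqP->.
rewrite leq_eqVlt => /orP[/eqP-> // | ij] jc.
exact: le_trans (b_nonincr jc) (IH ij (ltnW jc)).
Qed.

Definition in_band i k := (b i <= (fanout k)%:R) && ((fanout k)%:R < b i.-1).

Lemma in_band_le i i' k :
  (i' <= 2 * c)%N -> in_band i k -> in_band i' k -> (i' <= i)%N.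
Proof.
move=> i'c /andP[b_le _] /andP[_ lt_b]; rewrite leqNgt; apply/negP => ii'.
suff : b i'.-1 <= b i by rewrite leNgt (le_lt_trans b_le lt_b).
apply: b_le_of_leq; rewrite (leq_trans (leq_pred i') i'c) andbT -ltnS prednK //.
exact: leq_ltn_trans (leq0n i) ii'.
Qed.

Lemma card_bands_le1 k : (#|[set i : 'I_(2 * c) | in_band i.+1 k]| <= 1)%N.
Proof.
apply/card_le1_eqP => i i'; rewrite !inE => ki ki'; apply/val_inj/anti_leq/andP.
by split; [exact: (in_band_le (ltn_ord i') ki ki') |
           exact: (in_band_le (ltn_ord i) ki' ki)].
Qed.

Definition band_hit i : {set 'I_n} := [set j | [exists k in deps f j, in_band i k]].

Lemma sum_card_band_hit_le : (\sum_(i < 2 * c) #|band_hit i.+1| <= n * c)%N.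
Proof.
rewrite (sum_card_rel (fun (i : 'I_(2 * c)) j => [exists k in deps f j, in_band i.+1 k])).
apply: leq_trans sum_card_deps_le; apply: leq_sum => j _.
pose band_of k (i : 'I_(2 * c)) := in_band i.+1 k.
apply: leq_trans (card_exists_le_sum (deps f j) band_of) _.
by rewrite -sum1_card; apply: leq_sum => k _; apply: card_bands_le1.
Qed.

Lemma exists_sparse_band :
  (0 < c)%N -> exists i : 'I_(2 * c), (2 * #|band_hit i.+1| <= n)%N.
Proof.
move=> c_gt0; apply: exists_le_avg; first by rewrite muln_gt0.
by rewrite -big_distrr /= -mulnA leq_pmul2l // (mulnC c n) sum_card_band_hit_le.
Qed.

Lemma fanout_lt_outside_heavy i j k :
  j \notin band_hit i -> k \in deps f j :\: heavy (b i.-1) -> (fanout k)%:R < b i.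
Proof.
rewrite inE negb_exists => /forallP not_in_band; rewrite in_setD inE -ltNge => /andP[lt kj].
by move: (not_in_band k); rewrite kj /in_band lt andbT -ltNge.
Qed.

Hypothesis b_last_ge1 : 1 <= b (2 * c).

Lemma b_ge1 i : (i <= 2 * c)%N -> 1 <= b i.
Proof. by move=> ic; apply: le_trans b_last_ge1 (b_le_of_leq _); rewrite ic leqnn. Qed.

Lemma exists_conflict_free_outputs i : (0 < c)%N -> (i <= 2 * c)%N ->
  exists2 S : {set 'I_n}, #|~: band_hit i|%:R <= #|S|%:R * (c%:R * b i)
    & {in S &, forall j j', j != j' -> ~~ conflict (heavy (b i.-1)) j j'}.
Proof.
move=> c_gt0 ic.
have [S [sSG S_free G_le]] :=
  greedy_independent_set (conflict_sym (heavy (b i.-1))) (~: band_hit i).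
exists S => //.
apply: (@le_trans _ _ (\sum_(j in S) #|closed_nbhd (conflict (heavy (b i.-1))) j|)%:R).
  by rewrite ler_nat.
rewrite natr_sum mulr_natl -sumr_const; apply: ler_sum => j jS.
apply: card_conflict_nbhd_le => //; first exact: b_ge1.
by move=> k; apply: fanout_lt_outside_heavy; have := subsetP sSG j jS; rewrite inE.
Qed.

End Locality.

Theorem mainTheorem12 (R : realFieldType) (n m : nat)
  (f : {ffun 'I_m -> bool} -> 'I_n -> bool)
  (p : 'I_m -> R) (b : nat -> R) :
  (forall k, 0 <= p k <= 1) ->
  (0 < locality f)%N ->
  b 0%N <= n%:R ->
  (forall i, (i < 2 * locality f)%N -> b i.+1 <= b i) ->
  1 <= b (2 * locality f)%N ->
  exists (i : nat) (S : {set 'I_n}) (T : {set 'I_m}),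
    [/\ (0 < i <= 2 * locality f)%N,
        n%:R / ((2 * locality f)%:R * b i) <= #|S|%:R,
        #|T|%:R <= (locality f)%:R * n%:R / b i.-1
      & cond_indep p f S T].
Proof.
move=> _ c_gt0 _ b_nonincr b_last_ge1.
set c := locality f in c_gt0 b_nonincr b_last_ge1 *.
have [i0 sparse] := exists_sparse_band b_nonincr c_gt0.
have i0_lt : (i0 < 2 * c)%N := ltn_ord i0.
have [S G_le S_free] := exists_conflict_free_outputs b_nonincr b_last_ge1 c_gt0 i0_lt.
have b_gt0 i : (i <= 2 * c)%N -> 0 < b i.
  by move=> ic; apply: lt_le_trans ltr01 (b_ge1 b_nonincr b_last_ge1 ic).
exists i0.+1, S, (heavy f (b i0)); split => //.
- rewrite ler_pdivrMr ?mulr_gt0 ?ltr0n ?muln_gt0 ?b_gt0 //.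
  set A := band_hit f b i0.+1 in sparse G_le *.
  have G_large : (n <= 2 * #|~: A|)%N.
    have := cardsC A; rewrite card_ord => n_eq.
    rewrite -[X in (X <= _)%N]n_eq mul2n -addnn leq_add2r.
    by rewrite -[X in (_ <= X)%N]n_eq mul2n -addnn leq_add2l in sparse.
  apply: (@le_trans _ _ (2%:R * #|~: A|%:R)); first by rewrite -natrM ler_nat.
  by rewrite natrM -mulrA mulrCA ler_wpM2l ?ler0n.
- rewrite ler_pdivlMr; last exact/b_gt0/ltnW.
  by rewrite -natrM (mulnC c n) card_heavy_le.
apply: cond_indep_of_disjoint_deps => j j' jS j'S j_ne.
exact/deps_subset_of_no_conflict/S_free.
Qed.
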